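(* Let $M$ be a matroid on a finite set $E$ with $r(M)>0$. For every $B\in\mathcal{B}(M)$, $\cup F_M(B)=\cup\mathcal{B}(M)$.
   Context: For a matroid $M$: $\mathcal{I}(M)$ its independent sets, $\mathcal{B}(M)$ its bases, $r(M)$ the size of a base, $r(X)$ the rank of $X\subseteq E$. For a set family $S$, $\cup S=\bigcup_{X\in S}X$. $s(M)=\{A\in\mathcal{I}(M): |A|=r(M)-1\}$; $K_M(X)=\{a\in E: r(X\cup\{a\})=r(X)+1\}$; $F_M(B)=\{K_M(X): X\in s(M),\ X\subseteq B\}$. *)

(* Matroids on a finite ground set E, represented as a finType T
   (E = [set: T]), given by their family of independent sets. *)
From mathcomp Require Import all_boot.
Set Implicit Arguments. Unset Strict Implicit. Unset Printing Implicit Defensive.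

Section Matroid.
Variable T : finType.

Definition is_matroid (I : {set {set T}}) : Prop :=
  [/\ set0 \in I,
      (forall A B : {set T}, B \in I -> A \subset B -> A \in I) &
      (forall A B : {set T}, A \in I -> B \in I -> #|A| < #|B| ->
         exists2 x, x \in B :\: A & x |: A \in I)].

Definition mrank (I : {set {set T}}) (X : {set T}) : nat :=
  \max_(A in I | A \subset X) #|A|.

Definition bases (I : {set {set T}}) : {set {set T}} :=
  [set B | maxset (fun A : {set T} => A \in I) B].

Definition rankM (I : {set {set T}}) : nat := mrank I [set: T].

Definition sM (I : {set {set T}}) : {set {set T}} :=
  [set A in I | #|A| == (rankM I).-1].

Definition KM (I : {set {set T}}) (X : {set T}) : {set T} :=
  [set a | mrank I (a |: X) == (mrank I X).+1].

Definition FM (I : {set {set T}}) (B : {set T}) : {set {set T}} :=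
  [set KM I X | X in [set X in sM I | X \subset B]].

End Matroid.

From mathcomp Require Import all_boot.

(* Both unions consist exactly of the non-loops, the a with [set a] independent.
   For the bases this is extension of [set a] to a maximal independent set.
   For F_M(B), a non-loop a extends to a maximal independent A inside a |: B;
   augmenting against B shows that A has full rank, so X := A :\ a lies in s(M),
   X is contained in B, and a lies in K_M(X) because X :|: a = A is independent.
   Conversely a loop never raises the rank, so every K_M(X) consists of non-loops. *)

Set Implicit Arguments.
Unset Strict Implicit.
Unset Printing Implicit Defensive.

Section Matroid.
Variables (T : finType) (I : {set {set T}}).
Hypothesis matroidI : is_matroid I.

Lemma indep_sub (A B : {set T}) : B \in I -> A \subset B -> A \in I.
Proof. by case: matroidI => _ subI _; apply: subI. Qed.

Lemma indep_augment (A B : {set T}) :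
  A \in I -> B \in I -> #|A| < #|B| -> exists2 x, x \in B :\: A & x |: A \in I.
Proof. by case: matroidI => _ _; apply. Qed.

Lemma base_indep (B : {set T}) : B \in bases I -> B \in I.
Proof. by rewrite inE => /maxsetP[]. Qed.

Lemma mrank_indep (X : {set T}) : X \in I -> mrank I X = #|X|.
Proof.
move=> XI; apply/eqP; rewrite eqn_leq; apply/andP; split.
  by apply/bigmax_leqP => A /andP[_ sAX]; apply: subset_leq_card.
by apply: (leq_bigmax_cond (P := fun A => (A \in I) && (A \subset X))); rewrite XI subxx.
Qed.

Lemma card_indep_le_rankM (A : {set T}) : A \in I -> #|A| <= rankM I.
Proof.
move=> AI; apply: (leq_bigmax_cond (P := fun A => (A \in I) && (A \subset setT))).
by rewrite AI subsetT.
Qed.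

Lemma maxset_indep_card_ge (X A B : {set T}) :
  maxset (fun C => (C \in I) && (C \subset X)) A ->
  B \in I -> B \subset X -> #|B| <= #|A|.
Proof.
case/maxsetP => /andP[AI sAX] Amax BI sBX; rewrite leqNgt; apply/negP => ltAB.
have [x /setDP[xB xA] xAI] := indep_augment AI BI ltAB.
have sxAX : x |: A \subset X by rewrite subUset sub1set (subsetP sBX).
have := Amax _ (introT andP (conj xAI sxAX)) (subsetUr _ _).
by move/setP/(_ x); rewrite setU11 (negbTE xA).
Qed.

Lemma card_base (B : {set T}) : B \in bases I -> #|B| = rankM I.
Proof.
move=> Bbase; apply/eqP; rewrite eqn_leq card_indep_le_rankM ?base_indep //=.
apply/bigmax_leqP => A /andP[AI _]; apply: (@maxset_indep_card_ge setT) => //.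
apply/maxsetP; split=> [|C /andP[CI _] sBC]; first by rewrite base_indep ?subsetT.
by move: Bbase; rewrite inE => /maxsetP[_]; apply.
Qed.

Lemma mrank_setU1_loop (a : T) (X : {set T}) :
  [set a] \notin I -> mrank I (a |: X) <= mrank I X.
Proof.
move=> aloop; apply/bigmax_leqP => A /andP[AI sAaX].
apply: (leq_bigmax_cond (P := fun A => (A \in I) && (A \subset X))).
rewrite AI; apply/subsetP => y yA.
case/setU1P: (subsetP sAaX y yA) => // ya; subst y.
by case/negP: aloop; apply: (indep_sub AI); rewrite sub1set.
Qed.

Lemma KM_nonloop (a : T) (X : {set T}) : a \in KM I X -> [set a] \in I.
Proof.
rewrite inE => /eqP rankS; apply/negPn/negP => /(mrank_setU1_loop X).
by rewrite rankS ltnn.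
Qed.

Lemma nonloop_cover_bases (a : T) : (a \in cover (bases I)) = ([set a] \in I).
Proof.
apply/bigcupP/idP => [[B Bbase aB] | aI].
  by apply: (indep_sub (base_indep Bbase)); rewrite sub1set.
have [B Bmax aB] := maxset_exists aI.
by exists B; rewrite ?inE // -sub1set.
Qed.

Lemma nonloop_cover_FM (B : {set T}) (a : T) :
  B \in bases I -> [set a] \in I -> a \in cover (FM I B).
Proof.
move=> Bbase aI.
pose P := fun C : {set T} => (C \in I) && (C \subset a |: B).
have [A Amax aA] : {A | maxset P A & [set a] \subset A}.
  by apply: maxset_exists; rewrite /P aI sub1set setU11.
have /andP[AI sAaB] : P A by case/maxsetP: Amax.
rewrite sub1set in aA.
have cardA : #|A| = rankM I.
  apply/eqP; rewrite eqn_leq card_indep_le_rankM //= -(card_base Bbase).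
  by apply: (maxset_indep_card_ge Amax); rewrite ?base_indep ?subsetUr.
have AaI : A :\ a \in I by apply: (indep_sub AI); apply: subsetDl.
have cardAa : #|A :\ a| = (rankM I).-1 by rewrite -cardA (cardsD1 a A) aA.
apply/bigcupP; exists (KM I (A :\ a)).
  apply/imsetP; exists (A :\ a) => //.
  rewrite !inE AaI cardAa eqxx /=; apply/subsetP => y /setD1P[ya yA].
  by case/setU1P: (subsetP sAaB y yA) => // yEa; rewrite yEa eqxx in ya.
by rewrite inE setD1K // !mrank_indep // cardAa -cardA (cardsD1 a A) aA.
Qed.

End Matroid.

Theorem proposition4 (T : finType) (I : {set {set T}}) :
  is_matroid I -> 0 < rankM I ->
  forall B : {set T}, B \in bases I -> cover (FM I B) = cover (bases I).
Proof.
move=> matroidI _ B Bbase; apply/setP => a.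
rewrite (nonloop_cover_bases matroidI); apply/idP/idP.
  by case/bigcupP => K /imsetP[X _ ->]; apply: (KM_nonloop matroidI).
exact: (nonloop_cover_FM matroidI).
Qed.
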